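(* Let $F:B_{++}\to V_{++}$ be continuously differentiable (on an open neighbourhood of $B_{++}$ in $V_{++}$), with components $F_{w_{i,j}}$ ($i\in[K]$, $j\in[n_1]$) and $F_{u_{ab}}$ ($a\in[n_1]$, $b\in[d]$). Suppose $A\in\mathbb{R}^{(K+1)\times(K+1)}_+$ satisfies, for all $i,k\in[K]$, $j,a\in[n_1]$, $b\in[d]$ and $(w,u)\in B_{++}$, $$\langle|\nabla_{w_k}F_{w_{i,j}}(w,u)|,w_k\rangle\le A_{i,k}F_{w_{i,j}}(w,u),\qquad \langle|\nabla_u F_{w_{i,j}}(w,u)|,u\rangle\le A_{i,K+1}F_{w_{i,j}}(w,u),$$ $$\langle|\nabla_{w_k}F_{u_{ab}}(w,u)|,w_k\rangle\le A_{K+1,k}F_{u_{ab}}(w,u),\qquad \langle|\nabla_u F_{u_{ab}}(w,u)|,u\rangle\le A_{K+1,K+1}F_{u_{ab}}(w,u),$$ where $|\cdot|$ is the entrywise absolute value and $\langle\cdot,\cdot\rangle$ the Euclidean (Frobenius) inner product. Then for every $\gamma\in\mathbb{R}^{K+1}_{++}$ and all $(w,u),(\tilde w,\tilde u)\in B_{++}$, $$\mu_\gamma\big(F(w,u),F(\tilde w,\tilde u)\big)\le U\,\mu_\gamma\big((w,u),(\tilde w,\tilde u)\big),\qquad U=\max_{k\in[K+1]}\frac{(A^T\gamma)_k}{\gamma_k}.$$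
   Context: $\mathbb{R}_{++}=(0,\infty)$. $V_{++}=\mathbb{R}^{K\times n_1}_{++}\times\mathbb{R}^{n_1\times d}_{++}$; $w$ has rows $w_1,\dots,w_K$. Given $p_w,p_u\in(1,\infty)$ and $\rho_w,\rho_u>0$, $B_{++}=\{(w,u)\in V_{++} : \|u\|_{p_u}\le\rho_u,\ \|w_i\|_{p_w}\le\rho_w\ \forall i\in[K]\}$ ($\|u\|_{p_u}$ is the entrywise $\ell_{p_u}$ norm). For $\gamma\in\mathbb{R}^{K+1}_{++}$ the weighted Thompson metric on $B_{++}$ is $$\mu_\gamma\big((w,u),(\tilde w,\tilde u)\big)=\sum_{i=1}^K\gamma_i\|\ln(w_i)-\ln(\tilde w_i)\|_\infty+\gamma_{K+1}\|\ln(u)-\ln(\tilde u)\|_\infty,$$ with $\ln$ applied entrywise and $\|\cdot\|_\infty$ the maximum absolute entry. *)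

From Stdlib Require Import Reals Lra Lia Arith Compare_dec.
Open Scope R_scope.

(* index set [n] = {0,...,n-1} (0-based) *)
Definition Ix (n : nat) : Type := {i : nat | (i < n)%nat}.

Definition ix_eqb {n} (i j : Ix n) : bool := Nat.eqb (proj1_sig i) (proj1_sig j).

(* coordinates of V = R^{K x n1} x R^{n1 x d}:
   inl (i,j) is w_{i,j}, inr (a,b) is u_{a,b} *)
Definition coord (K n1 d : nat) : Type := ((Ix K * Ix n1) + (Ix n1 * Ix d))%type.

Definition coord_eqb {K n1 d} (c c' : coord K n1 d) : bool :=
  match c, c' with
  | inl (i, j), inl (i', j') => ix_eqb i i' && ix_eqb j j'
  | inr (a, b), inr (a', b') => ix_eqb a a' && ix_eqb b b'
  | _, _ => false
  end.

Definition pt (K n1 d : nat) : Type := coord K n1 d -> R.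

Definition wc {K n1 d} (p : pt K n1 d) (i : Ix K) (j : Ix n1) : R := p (inl (i, j)).
Definition uc {K n1 d} (p : pt K n1 d) (a : Ix n1) (b : Ix d) : R := p (inr (a, b)).

Definition upd {K n1 d} (p : pt K n1 d) (c : coord K n1 d) (t : R) : pt K n1 d :=
  fun c' => if coord_eqb c c' then p c' + t else p c'.

Fixpoint sumN (n : nat) (g : nat -> R) : R :=
  match n with O => 0 | S m => sumN m g + g m end.
Fixpoint maxN (n : nat) (g : nat -> R) : R :=
  match n with O => 0 | S m => Rmax (maxN m g) (g m) end.

Definition ext {n} (f : Ix n -> R) (i : nat) : R :=
  match lt_dec i n with left h => f (exist _ i h) | right _ => 0 end.

Definition sumIx (n : nat) (f : Ix n -> R) : R := sumN n (ext f).
(* maximum over [n]; used only for nonnegative families (0 for n = 0) *)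
Definition maxIx (n : nat) (f : Ix n -> R) : R := maxN n (ext f).

(* s^{1/p}, with 0^{1/p} = 0 *)
Definition rootp (s p : R) : R := if Req_EM_T s 0 then 0 else Rpower s (/ p).

Definition norm_w_row {K n1 d} (p : pt K n1 d) (pw : R) (i : Ix K) : R :=
  rootp (sumIx n1 (fun j => Rpower (Rabs (wc p i j)) pw)) pw.
Definition norm_u {K n1 d} (p : pt K n1 d) (pu : R) : R :=
  rootp (sumIx n1 (fun a => sumIx d (fun b => Rpower (Rabs (uc p a b)) pu))) pu.

Definition Vpp {K n1 d} (p : pt K n1 d) : Prop := forall c, 0 < p c.

Definition Bpp {K n1 d} (pw pu rw ru : R) (p : pt K n1 d) : Prop :=
  Vpp p /\ norm_u p pu <= ru /\ (forall i, norm_w_row p pw i <= rw).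

(* openness in V (w.r.t. the max-norm, equivalent to any norm) *)
Definition open_V {K n1 d} (O : pt K n1 d -> Prop) : Prop :=
  forall p, O p -> exists r, 0 < r /\
    forall q, (forall c, Rabs (q c - p c) < r) -> O q.

(* F is C^1 on O with partial derivatives dF c c' = d F_c / d x_{c'} *)
Definition C1_on {K n1 d} (O : pt K n1 d -> Prop) (F : pt K n1 d -> pt K n1 d)
  (dF : coord K n1 d -> coord K n1 d -> pt K n1 d -> R) : Prop :=
  (forall p c c', O p -> derivable_pt_lim (fun t => F (upd p c' t) c) 0 (dF c c' p)) /\
  (forall c c' p, O p -> forall eps, 0 < eps -> exists delta, 0 < delta /\
     forall q, O q -> (forall e, Rabs (q e - p e) < delta) ->
       Rabs (dF c c' q - dF c c' p) < eps).

(* weighted Thompson metric; gamma is 0-based: gamma i (i < K) for w_i, gamma K for u *)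
Definition mu_gamma {K n1 d} (gamma : nat -> R) (p q : pt K n1 d) : R :=
  sumIx K (fun i => gamma (proj1_sig i) *
     maxIx n1 (fun j => Rabs (ln (wc p i j) - ln (wc q i j))))
  + gamma K * maxIx n1 (fun a => maxIx d (fun b => Rabs (ln (uc p a b) - ln (uc q a b)))).

Definition gw {K n1 d} (dF : coord K n1 d -> coord K n1 d -> pt K n1 d -> R)
  (c : coord K n1 d) (k : Ix K) (p : pt K n1 d) : R :=
  sumIx n1 (fun l => Rabs (dF c (inl (k, l)) p) * wc p k l).
Definition gu {K n1 d} (dF : coord K n1 d -> coord K n1 d -> pt K n1 d -> R)
  (c : coord K n1 d) (p : pt K n1 d) : R :=
  sumIx n1 (fun a => sumIx d (fun b => Rabs (dF c (inr (a, b)) p) * uc p a b)).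

Definition Ubound (K : nat) (A : nat -> nat -> R) (gamma : nat -> R) : R :=
  maxN (S K) (fun k => sumN (S K) (fun i => A i k * gamma i) / gamma k).

(** Join [p] and [q] by the geometric path [s |-> exp ((1 - s) ln p + s ln q)] (entrywise).
    As [x |-> exp (r x)] is convex, every entrywise [l_r]-ball is log-convex, so the path stays
    in [B_{++}]. Along it, by the chain rule,
    [d/ds ln F_c = (1/F_c) Σ_c' ∂_c' F_c · x_c' · (ln q_c' - ln p_c')], and bounding each
    [|ln q_c' - ln p_c'|] by the Thompson distance [d_k] of the block [k] containing [c'] turns
    the hypotheses on [A] into [|d/ds ln F_c| <= Σ_k A_(r,k) d_k], [r] the block of [c]. The
    mean value theorem transfers this to [|ln F_c(p) - ln F_c(q)|]; summing with the weights
    [γ] and exchanging the sums gives [Σ_k (A^T γ)_k d_k <= U Σ_k γ_k d_k]. *)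

From Stdlib Require Import Reals Lra Lia Arith List FunctionalExtensionality.
From Stdlib Require FinFun.
Open Scope R_scope.

Lemma Ix_eq {n} (i j : Ix n) : proj1_sig i = proj1_sig j -> i = j.
Proof.
  destruct i as [i hi], j as [j hj]; simpl; intros ->.
  f_equal; apply Peano_dec.le_unique.
Qed.

Lemma ix_eqb_spec {n} (i j : Ix n) : ix_eqb i j = true <-> i = j.
Proof.
  unfold ix_eqb; rewrite Nat.eqb_eq; split; [apply Ix_eq | intros ->; reflexivity].
Qed.

Lemma coord_eqb_spec {K n1 d} (c c' : coord K n1 d) : coord_eqb c c' = true <-> c = c'.
Proof.
  destruct c as [[i j]|[a b]], c' as [[i' j']|[a' b']]; simpl;
    try (split; [discriminate | congruence]);
    rewrite Bool.andb_true_iff, !ix_eqb_spec; split;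
    (intros [-> ->]; reflexivity) || (intros H; inversion H; auto).
Qed.

Lemma coord_eq_dec {K n1 d} (c c' : coord K n1 d) : {c = c'} + {c <> c'}.
Proof.
  destruct (coord_eqb c c') eqn:E.
  - left; apply coord_eqb_spec; exact E.
  - right; intros H; apply coord_eqb_spec in H; congruence.
Qed.

Lemma upd_same {K n1 d} (p : pt K n1 d) c t : upd p c t c = p c + t.
Proof. unfold upd; rewrite (proj2 (coord_eqb_spec c c) eq_refl); reflexivity. Qed.

Lemma upd_other {K n1 d} (p : pt K n1 d) c c' t : c <> c' -> upd p c t c' = p c'.
Proof.
  intros H; unfold upd; destruct (coord_eqb c c') eqn:E; auto.
  apply coord_eqb_spec in E; congruence.
Qed.

Lemma upd_upd {K n1 d} (p : pt K n1 d) c t h : upd (upd p c t) c h = upd p c (t + h).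
Proof.
  apply functional_extensionality; intros c'; destruct (coord_eq_dec c c') as [<-|H].
  - rewrite !upd_same; ring.
  - rewrite !upd_other; auto.
Qed.

Lemma upd_0 {K n1 d} (p : pt K n1 d) c : upd p c 0 = p.
Proof.
  apply functional_extensionality; intros c'; destruct (coord_eq_dec c c') as [<-|H].
  - rewrite upd_same; ring.
  - rewrite upd_other; auto.
Qed.

Fixpoint Ix_upto (n m : nat) : (m <= n)%nat -> list (Ix n) :=
  match m return (m <= n)%nat -> list (Ix n) with
  | O => fun _ => nil
  | S m' => fun H => exist _ m' H :: Ix_upto n m' (Nat.lt_le_incl _ _ H)
  end.

Lemma In_Ix_upto n m H (i : Ix n) : (proj1_sig i < m)%nat -> In i (Ix_upto n m H).
Proof.
  induction m as [|m IH]; simpl; intros Hi; [lia|].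
  destruct (Nat.eq_dec (proj1_sig i) m) as [E|E].
  - left; apply Ix_eq; simpl; auto.
  - right; apply IH; lia.
Qed.

Lemma Ix_upto_bound n m H (i : Ix n) : In i (Ix_upto n m H) -> (proj1_sig i < m)%nat.
Proof.
  induction m as [|m IH]; simpl; [tauto|].
  intros [<-|Hi]; simpl; [lia|]. specialize (IH _ Hi); lia.
Qed.

Lemma NoDup_Ix_upto n m H : NoDup (Ix_upto n m H).
Proof.
  induction m; simpl; constructor; auto.
  intros Hi; apply Ix_upto_bound in Hi; simpl in Hi; lia.
Qed.

Definition enum_Ix n : list (Ix n) := Ix_upto n n (le_n n).

Lemma In_enum_Ix n (i : Ix n) : In i (enum_Ix n).
Proof. apply In_Ix_upto; destruct i; simpl; auto. Qed.

Definition lsum {A} (L : list A) (f : A -> R) : R :=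
  fold_right (fun x acc => f x + acc) 0 L.

Lemma lsum_Ix_upto n m H (f : Ix n -> R) : lsum (Ix_upto n m H) f = sumN m (ext f).
Proof.
  induction m as [|m IH]; simpl; auto.
  rewrite IH; unfold ext; destruct (lt_dec m n) as [h|h]; [|lia].
  replace (exist _ m h) with (exist (fun i => (i < n)%nat) m H)
    by (apply Ix_eq; reflexivity); ring.
Qed.

Lemma lsum_enum_Ix n (f : Ix n -> R) : lsum (enum_Ix n) f = sumIx n f.
Proof. apply lsum_Ix_upto. Qed.

Lemma lsum_app {A} (L1 L2 : list A) f : lsum (L1 ++ L2) f = lsum L1 f + lsum L2 f.
Proof. induction L1 as [|x L1 IH]; simpl; [ring|]. rewrite IH; ring. Qed.

Lemma lsum_map {A B} (g : A -> B) L f : lsum (map g L) f = lsum L (fun x => f (g x)).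
Proof. induction L as [|x L IH]; simpl; auto. rewrite IH; auto. Qed.

Lemma lsum_flat_map {A B} (g : A -> list B) L f :
  lsum (flat_map g L) f = lsum L (fun x => lsum (g x) f).
Proof. induction L as [|x L IH]; simpl; auto. rewrite lsum_app, IH; auto. Qed.

Lemma lsum_ext {A} (L : list A) f g : (forall x, In x L -> f x = g x) -> lsum L f = lsum L g.
Proof. induction L; simpl; intros H; auto. rewrite H, IHL; auto. Qed.

Lemma lsum_le {A} (L : list A) f g :
  (forall x, In x L -> f x <= g x) -> lsum L f <= lsum L g.
Proof. induction L; simpl; intros H; [lra|]. apply Rplus_le_compat; auto. Qed.

Lemma lsum_abs {A} (L : list A) f : Rabs (lsum L f) <= lsum L (fun x => Rabs (f x)).
Proof.
  induction L as [|x L IH]; simpl; [rewrite Rabs_R0; lra|].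
  eapply Rle_trans; [apply Rabs_triang | lra].
Qed.

Lemma lsum_minus {A} (L : list A) f g :
  lsum L (fun x => f x - g x) = lsum L f - lsum L g.
Proof. induction L as [|x L IH]; simpl; [ring|]. rewrite IH; ring. Qed.

Lemma lsum_scal {A} (L : list A) a f : lsum L (fun x => a * f x) = a * lsum L f.
Proof. induction L as [|x L IH]; simpl; [ring|]. rewrite IH; ring. Qed.

Lemma lsum_nonneg {A} (L : list A) f : (forall x, In x L -> 0 <= f x) -> 0 <= lsum L f.
Proof.
  induction L as [|x L IH]; simpl; intros H; [lra|].
  pose proof (H x (or_introl eq_refl)); pose proof (IH (fun y h => H y (or_intror h))); lra.
Qed.

Lemma sumN_ext n (f g : nat -> R) : (forall i, (i < n)%nat -> f i = g i) -> sumN n f = sumN n g.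
Proof. induction n; simpl; intros H; auto. rewrite IHn, H; auto. Qed.

Lemma sumN_le n (f g : nat -> R) : (forall i, (i < n)%nat -> f i <= g i) -> sumN n f <= sumN n g.
Proof. induction n; simpl; intros H; [lra|]. apply Rplus_le_compat; auto. Qed.

Lemma sumN_nonneg n (f : nat -> R) : (forall i, (i < n)%nat -> 0 <= f i) -> 0 <= sumN n f.
Proof. induction n; simpl; intros H; [lra|]. apply Rplus_le_le_0_compat; auto. Qed.

Lemma sumN_plus n (f g : nat -> R) : sumN n (fun i => f i + g i) = sumN n f + sumN n g.
Proof. induction n; simpl; [ring|]. rewrite IHn; ring. Qed.

Lemma sumN_scal n a (f : nat -> R) : sumN n (fun i => a * f i) = a * sumN n f.
Proof. induction n; simpl; [ring|]. rewrite IHn; ring. Qed.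

Lemma sumN_exchange n m (f : nat -> nat -> R) :
  sumN n (fun i => sumN m (fun k => f i k)) = sumN m (fun k => sumN n (fun i => f i k)).
Proof.
  induction n; simpl.
  - induction m; simpl; auto. rewrite <- IHm; ring.
  - rewrite IHn, <- sumN_plus; auto.
Qed.

Lemma maxN_ge n (g : nat -> R) (i : nat) : (i < n)%nat -> g i <= maxN n g.
Proof.
  induction n; simpl; intros H; [lia|].
  destruct (Nat.eq_dec i n) as [->|Hn]; [apply Rmax_r|].
  eapply Rle_trans; [apply IHn; lia | apply Rmax_l].
Qed.

Lemma maxN_nonneg n (g : nat -> R) : 0 <= maxN n g.
Proof. induction n; simpl; [lra|]. eapply Rle_trans; [exact IHn | apply Rmax_l]. Qed.

Lemma maxN_le n (g : nat -> R) T : 0 <= T -> (forall i, (i < n)%nat -> g i <= T) -> maxN n g <= T.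
Proof. induction n; simpl; intros HT H; auto. apply Rmax_lub; auto. Qed.

Lemma maxIx_ge n (f : Ix n -> R) j : f j <= maxIx n f.
Proof.
  unfold maxIx; replace (f j) with (ext f (proj1_sig j)).
  - apply maxN_ge; destruct j; auto.
  - unfold ext; destruct lt_dec as [h|h]; [f_equal; apply Ix_eq; reflexivity|].
    destruct j; simpl in h; lia.
Qed.

Lemma maxIx_nonneg n (f : Ix n -> R) : 0 <= maxIx n f.
Proof. apply maxN_nonneg. Qed.

Lemma maxIx_le n (f : Ix n -> R) T : 0 <= T -> (forall j, f j <= T) -> maxIx n f <= T.
Proof.
  intros HT H; apply maxN_le; auto.
  intros i Hi; unfold ext; destruct lt_dec; [apply H | lia].
Qed.

Lemma sumIx_ext n (f g : Ix n -> R) : (forall j, f j = g j) -> sumIx n f = sumIx n g.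
Proof. intros H; rewrite <- !lsum_enum_Ix; apply lsum_ext; auto. Qed.

Lemma sumIx_le n (f g : Ix n -> R) : (forall j, f j <= g j) -> sumIx n f <= sumIx n g.
Proof. intros H; rewrite <- !lsum_enum_Ix; apply lsum_le; auto. Qed.

Lemma sumIx_scal n a (f : Ix n -> R) : sumIx n (fun j => a * f j) = a * sumIx n f.
Proof. rewrite <- !lsum_enum_Ix; apply lsum_scal. Qed.

Lemma sumIx_nonneg n (f : Ix n -> R) : (forall j, 0 <= f j) -> 0 <= sumIx n f.
Proof. intros H; rewrite <- lsum_enum_Ix; apply lsum_nonneg; auto. Qed.

Lemma sumIx_convex_le n (f g h : Ix n -> R) s :
  (forall j, f j <= (1 - s) * g j + s * h j) ->
  sumIx n f <= (1 - s) * sumIx n g + s * sumIx n h.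
Proof.
  intros H; rewrite <- !lsum_enum_Ix.
  induction (enum_Ix n) as [|j L IH]; simpl; [lra|].
  specialize (H j); lra.
Qed.

Lemma sumIx_proj1 n (h : nat -> R) : sumIx n (fun i => h (proj1_sig i)) = sumN n h.
Proof.
  apply sumN_ext; intros i Hi; unfold ext; destruct lt_dec; [reflexivity | lia].
Qed.

Definition enum_coord K n1 d : list (coord K n1 d) :=
  flat_map (fun k => map (fun l => inl (k, l)) (enum_Ix n1)) (enum_Ix K) ++
  flat_map (fun a => map (fun b => inr (a, b)) (enum_Ix d)) (enum_Ix n1).

Lemma In_enum_coord {K n1 d} (c : coord K n1 d) : In c (enum_coord K n1 d).
Proof.
  unfold enum_coord; apply in_or_app; destruct c as [[i j]|[a b]].
  - left; apply in_flat_map; exists i; split; [apply In_enum_Ix|].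
    apply (in_map (fun l => inl (i, l))), In_enum_Ix.
  - right; apply in_flat_map; exists a; split; [apply In_enum_Ix|].
    apply (in_map (fun b0 => inr (a, b0))), In_enum_Ix.
Qed.

Lemma NoDup_flat_map_disjoint {A B} (g : A -> list B) L :
  NoDup L -> (forall x, NoDup (g x)) ->
  (forall x y z, In z (g x) -> In z (g y) -> x = y) -> NoDup (flat_map g L).
Proof.
  induction L as [|x L IH]; simpl; intros HL Hg Hd; [constructor|].
  inversion HL; subst; apply NoDup_app; auto.
  intros z Hz Hz'; apply in_flat_map in Hz'; destruct Hz' as [y [Hy Hzy]].
  assert (x = y) by (eapply Hd; eauto); subst; tauto.
Qed.

Lemma NoDup_enum_coord K n1 d : NoDup (enum_coord K n1 d).
Proof.
  assert (HI : forall n, NoDup (enum_Ix n)) by (intros; apply NoDup_Ix_upto).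
  unfold enum_coord; apply NoDup_app.
  - apply NoDup_flat_map_disjoint; auto.
    + intros; apply FinFun.Injective_map_NoDup; auto; intros ? ? H; congruence.
    + intros x y z H1 H2; apply in_map_iff in H1, H2.
      destruct H1 as [? [<- _]], H2 as [? [H _]]; congruence.
  - apply NoDup_flat_map_disjoint; auto.
    + intros; apply FinFun.Injective_map_NoDup; auto; intros ? ? H; congruence.
    + intros x y z H1 H2; apply in_map_iff in H1, H2.
      destruct H1 as [? [<- _]], H2 as [? [H _]]; congruence.
  - intros z H1 H2; apply in_flat_map in H1, H2.
    destruct H1 as [? [_ H1]], H2 as [? [_ H2]]; apply in_map_iff in H1, H2.
    destruct H1 as [? [<- _]], H2 as [? [H _]]; congruence.
Qed.

Lemma lsum_enum_coord {K n1 d} (f : coord K n1 d -> R) :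
  lsum (enum_coord K n1 d) f =
  sumIx K (fun k => sumIx n1 (fun l => f (inl (k, l))))
  + sumIx n1 (fun a => sumIx d (fun b => f (inr (a, b)))).
Proof.
  unfold enum_coord; rewrite lsum_app, !lsum_flat_map, <- !lsum_enum_Ix.
  f_equal; apply lsum_ext; intros; rewrite lsum_map, lsum_enum_Ix; reflexivity.
Qed.

(** * A chain rule *)

Lemma exists_common_delta {A} (L : list A) (P : A -> R -> Prop) :
  (forall x d1 d2, 0 < d1 <= d2 -> P x d2 -> P x d1) ->
  (forall x, In x L -> exists del, 0 < del /\ P x del) ->
  exists del, 0 < del /\ forall x, In x L -> P x del.
Proof.
  intros Hmono; induction L as [|x L IH]; simpl; intros H.
  - exists 1; split; [lra | tauto].
  - destruct (H x (or_introl eq_refl)) as [d1 [Hd1 P1]].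
    destruct IH as [d2 [Hd2 P2]]; [intros; apply H; auto|].
    exists (Rmin d1 d2); split; [apply Rmin_pos; auto|].
    assert (0 < Rmin d1 d2) by (apply Rmin_pos; auto).
    intros y [<-|Hy]; eapply Hmono; eauto; split; auto; [apply Rmin_l | apply Rmin_r].
Qed.

Lemma derivable_pt_lim_shift f t l :
  derivable_pt_lim (fun h => f (t + h)) 0 l -> derivable_pt_lim f t l.
Proof.
  intros H eps Heps; destruct (H eps Heps) as [del Hdel]; exists del; intros h Hh Hh'.
  specialize (Hdel h Hh Hh'); rewrite !Rplus_0_l, Rplus_0_r in Hdel; exact Hdel.
Qed.

Lemma derivable_pt_lim_local_lipschitz f t l : derivable_pt_lim f t l ->
  exists del, 0 < del /\
    forall h, Rabs h < del -> Rabs (f (t + h) - f t) <= (Rabs l + 1) * Rabs h.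
Proof.
  intros Hf; destruct (Hf 1 Rlt_0_1) as [del Hdel].
  exists del; split; [apply cond_pos|]; intros h Hh.
  destruct (Req_dec h 0) as [->|Hh0].
  - rewrite Rplus_0_r, Rminus_diag, !Rabs_R0; lra.
  - specialize (Hdel h Hh0 Hh).
    replace (f (t + h) - f t) with (h * ((f (t + h) - f t) / h)) by (field; auto).
    rewrite Rabs_mult, Rmult_comm; apply Rmult_le_compat_r; [apply Rabs_pos|].
    pose proof (Rabs_triang_inv ((f (t + h) - f t) / h) l); lra.
Qed.

Lemma derivable_pt_lim_0_of_little_o f t :
  (forall eps, 0 < eps -> exists del, 0 < del /\
     forall h, Rabs h < del -> Rabs (f (t + h) - f t) <= eps * Rabs h) ->
  derivable_pt_lim f t 0.
Proof.
  intros Hf eps Heps; destruct (Hf (eps / 2) ltac:(lra)) as [del [Hdel H]].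
  exists (mkposreal del Hdel); intros h Hh0 Hh; simpl in Hh.
  specialize (H h Hh); apply Rabs_pos_lt in Hh0.
  rewrite Rminus_0_r; unfold Rdiv; rewrite Rabs_mult, Rabs_inv.
  apply (Rmult_lt_reg_r (Rabs h)); auto.
  rewrite Rmult_assoc, Rinv_l, Rmult_1_r by lra; nra.
Qed.

Lemma derivable_pt_lim_lsum {X} (L : list X) (g v : X -> R) (path : R -> X -> R) t :
  (forall x, derivable_pt_lim (fun s => path s x) t (v x)) ->
  derivable_pt_lim (fun s => lsum L (fun x => g x * path s x)) t (lsum L (fun x => g x * v x)).
Proof.
  intros Hv; induction L as [|x L IH]; simpl.
  - exact (derivable_pt_lim_const 0 t).
  - exact (derivable_pt_lim_plus _ _ t _ _ (derivable_pt_lim_scal _ (g x) t _ (Hv x)) IH).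
Qed.

Lemma increments_uniformly_small {X} (L : list X) (path : R -> X -> R) v t e : 0 < e ->
  (forall x, derivable_pt_lim (fun s => path s x) t (v x)) ->
  exists del, 0 < del /\ forall x, In x L -> forall h, Rabs h < del ->
    Rabs (path (t + h) x - path t x) <= (Rabs (v x) + 1) * Rabs h < e.
Proof.
  intros He Hv; apply exists_common_delta; [intros x d1 d2 Hd H h Hh; apply H; lra|].
  intros x _.
  destruct (derivable_pt_lim_local_lipschitz _ _ _ (Hv x)) as [d0 [Hd0 Hlip]].
  assert (Hm : 0 < Rabs (v x) + 1) by (pose proof (Rabs_pos (v x)); lra).
  exists (Rmin d0 (e / (Rabs (v x) + 1))).
  split; [apply Rmin_pos; auto; apply Rdiv_lt_0_compat; auto|]; intros h Hh; split.
  - apply Hlip; pose proof (Rmin_l d0 (e / (Rabs (v x) + 1))); lra.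
  - assert (Hh' : Rabs h < e / (Rabs (v x) + 1))
      by (pose proof (Rmin_r d0 (e / (Rabs (v x) + 1))); lra).
    apply (Rmult_lt_compat_l (Rabs (v x) + 1)) in Hh'; [|lra].
    replace ((Rabs (v x) + 1) * (e / (Rabs (v x) + 1))) with e in Hh' by (field; lra).
    exact Hh'.
Qed.

Lemma chain_rule {X} (L : list X) (G : (X -> R) -> R) (p0 g v : X -> R)
  (path : R -> X -> R) t :
  (forall x, In x L) -> path t = p0 ->
  (forall x, derivable_pt_lim (fun s => path s x) t (v x)) ->
  (forall eta, 0 < eta -> exists del, 0 < del /\
     forall y, (forall x, Rabs (y x - p0 x) < del) ->
     Rabs (G y - G p0 - lsum L (fun x => g x * (y x - p0 x)))
       <= eta * lsum L (fun x => Rabs (y x - p0 x))) ->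
  derivable_pt_lim (fun s => G (path s)) t (lsum L (fun x => g x * v x)).
Proof.
  intros HL Ht Hv HG.
  set (lin := fun s => lsum L (fun x => g x * path s x)).
  assert (Hrem : derivable_pt_lim (fun s => G (path s) - lin s) t 0).
  { apply derivable_pt_lim_0_of_little_o; intros eps Heps.
    set (S := lsum L (fun x => Rabs (v x) + 1)).
    assert (HS : 0 <= S)
      by (apply lsum_nonneg; intros x _; pose proof (Rabs_pos (v x)); lra).
    assert (Heta : 0 < eps / (S + 1)) by (apply Rdiv_lt_0_compat; lra).
    destruct (HG _ Heta) as [del1 [Hdel1 H1]].
    destruct (increments_uniformly_small L path v t del1 Hdel1 Hv) as [del [Hdel Hclose]].
    rewrite Ht in Hclose.
    exists del; split; auto; intros h Hh.
    replace (G (path (t + h)) - lin (t + h) - (G (path t) - lin t))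
      with (G (path (t + h)) - G p0 - lsum L (fun x => g x * (path (t + h) x - p0 x))).
    2:{ unfold lin; cbv beta; rewrite Ht.
        rewrite (lsum_ext L _ (fun x => g x * path (t + h) x - g x * p0 x))
          by (intros; ring).
        rewrite lsum_minus; ring. }
    eapply Rle_trans; [apply H1; intros x; destruct (Hclose x (HL x) h Hh); lra|].
    apply Rle_trans with (eps / (S + 1) * (S * Rabs h)).
    - apply Rmult_le_compat_l; [lra|].
      unfold S; rewrite Rmult_comm, <- lsum_scal; apply lsum_le; intros x _.
      rewrite Rmult_comm; apply (proj1 (Hclose x (HL x) h Hh)).
    - replace (eps / (S + 1) * (S * Rabs h)) with (eps * Rabs h - eps / (S + 1) * Rabs h)
        by (field; lra).
      pose proof (Rabs_pos h); nra. }
  replace (fun s => G (path s)) with (fun s => (G (path s) - lin s) + lin s)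
    by (apply functional_extensionality; intros; ring).
  rewrite <- (Rplus_0_l (lsum L (fun x => g x * v x))).
  exact (derivable_pt_lim_plus _ _ t _ _ Hrem (derivable_pt_lim_lsum L g v path t Hv)).
Qed.

(** * Differentiability of a [C^1] map *)

Definition splice {K n1 d} (M : list (coord K n1 d)) (y p0 : pt K n1 d) : pt K n1 d :=
  fun c => if in_dec coord_eq_dec c M then y c else p0 c.

Lemma splice_nil {K n1 d} (y p0 : pt K n1 d) : splice nil y p0 = p0.
Proof. reflexivity. Qed.

Lemma splice_full {K n1 d} M (y p0 : pt K n1 d) : (forall c, In c M) -> splice M y p0 = y.
Proof.
  intros HM; apply functional_extensionality; intros c; unfold splice.
  destruct in_dec; [reflexivity | exfalso; auto].
Qed.

Lemma splice_cons {K n1 d} c0 M (y p0 : pt K n1 d) : ~ In c0 M ->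
  splice (c0 :: M) y p0 = upd (splice M y p0) c0 (y c0 - p0 c0).
Proof.
  intros Hc0; apply functional_extensionality; intros c; unfold splice.
  destruct (coord_eq_dec c0 c) as [<-|Hne].
  - rewrite upd_same; destruct in_dec as [_|H]; [|simpl in H; tauto].
    destruct in_dec; [tauto | ring].
  - rewrite upd_other by auto.
    destruct (in_dec coord_eq_dec c (c0 :: M)) as [[H|H]|H]; [congruence| |];
      destruct in_dec; simpl in *; tauto.
Qed.

Lemma splice_close {K n1 d} M (y p0 : pt K n1 d) del : 0 < del ->
  (forall c, Rabs (y c - p0 c) < del) -> forall c, Rabs (splice M y p0 c - p0 c) < del.
Proof.
  intros Hdel Hy c; unfold splice; destruct in_dec; auto.
  rewrite Rminus_diag, Rabs_R0; exact Hdel.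
Qed.

Lemma segment_close {K n1 d} (Z p0 : pt K n1 d) c0 D t del :
  (forall c, Rabs (Z c - p0 c) < del) -> Rabs (Z c0 + D - p0 c0) < del ->
  Rmin 0 D <= t <= Rmax 0 D -> forall c, Rabs (upd Z c0 t c - p0 c) < del.
Proof.
  intros HZ HZD Ht c; destruct (coord_eq_dec c0 c) as [<-|Hne].
  - rewrite upd_same; specialize (HZ c0).
    unfold Rmin, Rmax in Ht; destruct (Rle_dec 0 D);
      revert HZ HZD; unfold Rabs; repeat destruct Rcase_abs; intros; lra.
  - rewrite upd_other; auto.
Qed.

Section FirstOrder.
Context {K n1 d : nat} (F : pt K n1 d -> pt K n1 d)
  (dF : coord K n1 d -> coord K n1 d -> pt K n1 d -> R) (Om : pt K n1 d -> Prop).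
Hypotheses (hOopen : open_V Om) (hC1 : C1_on Om F dF).

(* The mean value theorem along the [c0]-th coordinate, with the continuity of the
   partial derivative at [p0]. *)
Lemma partial_increment_approx p0 c c0 eta : Om p0 -> 0 < eta -> exists del, 0 < del /\
  forall Z D, (forall c', Rabs (Z c' - p0 c') < del) -> Rabs (Z c0 + D - p0 c0) < del ->
  Rabs (F (upd Z c0 D) c - F Z c - dF c c0 p0 * D) <= eta * Rabs D.
Proof.
  intros Hp0 Heta.
  destruct (hOopen p0 Hp0) as [r [Hr HrO]].
  destruct (proj2 hC1 c c0 p0 Hp0 eta Heta) as [d1 [Hd1 Hcont]].
  exists (Rmin r d1); split; [apply Rmin_pos; auto|]; intros Z D HZ HZD.
  assert (Hseg : forall t, Rmin 0 D <= t <= Rmax 0 D ->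
    Om (upd Z c0 t) /\ forall c', Rabs (upd Z c0 t c' - p0 c') < d1).
  { intros t Ht; pose proof (segment_close Z p0 c0 D t _ HZ HZD Ht) as Hc.
    pose proof (Rmin_l r d1); pose proof (Rmin_r r d1).
    split; [apply HrO|]; intros c'; specialize (Hc c'); lra. }
  destruct (MVT_abs (fun t => F (upd Z c0 t) c - dF c c0 p0 * t)
    (fun t => dF c c0 (upd Z c0 t) - dF c c0 p0) 0 D) as [xi [Hxi Hrange]].
  { intros t Ht; apply derivable_pt_lim_minus.
    - apply derivable_pt_lim_shift.
      replace (fun h => F (upd Z c0 (t + h)) c) with (fun h => F (upd (upd Z c0 t) c0 h) c)
        by (apply functional_extensionality; intros h; rewrite upd_upd; reflexivity).
      apply (proj1 hC1), Hseg, Ht.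
    - rewrite <- (Rmult_1_r (dF c c0 p0)) at 2.
      apply (derivable_pt_lim_scal id), derivable_pt_lim_id. }
  rewrite upd_0, Rmult_0_r, Rminus_0_r, Rminus_0_r in Hxi.
  replace (F (upd Z c0 D) c - F Z c - dF c c0 p0 * D)
    with (F (upd Z c0 D) c - dF c c0 p0 * D - F Z c) by ring.
  rewrite Hxi; apply Rmult_le_compat_r; [apply Rabs_pos|].
  left; apply Hcont; apply Hseg, Hrange.
Qed.

(* Telescoping over the coordinates, changing one coordinate at a time. *)
Lemma first_order_approx p0 c eta : Om p0 -> 0 < eta -> exists del, 0 < del /\
  forall y, (forall c', Rabs (y c' - p0 c') < del) ->
  Rabs (F y c - F p0 c - lsum (enum_coord K n1 d) (fun c' => dF c c' p0 * (y c' - p0 c')))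
    <= eta * lsum (enum_coord K n1 d) (fun c' => Rabs (y c' - p0 c')).
Proof.
  intros Hp0 Heta.
  destruct (exists_common_delta (enum_coord K n1 d) (fun c0 del =>
    forall Z D, (forall c', Rabs (Z c' - p0 c') < del) -> Rabs (Z c0 + D - p0 c0) < del ->
    Rabs (F (upd Z c0 D) c - F Z c - dF c c0 p0 * D) <= eta * Rabs D)) as [del [Hdel HP]].
  { intros x d1 d2 Hd H Z D H1 H2; apply H; [intros c'; specialize (H1 c')|]; lra. }
  { intros x _; apply partial_increment_approx; auto. }
  exists del; split; auto; intros y Hy.
  assert (Htel : forall M, NoDup M ->
    Rabs (F (splice M y p0) c - F p0 c - lsum M (fun c' => dF c c' p0 * (y c' - p0 c')))
      <= eta * lsum M (fun c' => Rabs (y c' - p0 c'))).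
  { induction M as [|c0 M IH]; intros Hnd; simpl.
    - rewrite splice_nil, !Rminus_diag, Rabs_R0; lra.
    - inversion Hnd as [|? ? Hc0 HM]; subst.
      rewrite splice_cons by exact Hc0.
      assert (Hstep := HP c0 (In_enum_coord c0) (splice M y p0) (y c0 - p0 c0)
        (splice_close M y p0 del Hdel Hy)).
      replace (splice M y p0 c0 + (y c0 - p0 c0) - p0 c0) with (y c0 - p0 c0) in Hstep
        by (unfold splice; destruct in_dec; [tauto | ring]).
      specialize (Hstep (Hy c0)); specialize (IH HM).
      rewrite Rmult_plus_distr_l.
      eapply Rle_trans; [|apply Rplus_le_compat; [exact Hstep | exact IH]].
      eapply Rle_trans; [|apply Rabs_triang]; right; f_equal; ring. }
  rewrite <- (splice_full (enum_coord K n1 d) y p0 In_enum_coord) at 1.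
  apply Htel, NoDup_enum_coord.
Qed.

End FirstOrder.

(** * The geometric path *)

Lemma exp_convex a b s : 0 <= s <= 1 ->
  exp ((1 - s) * a + s * b) <= (1 - s) * exp a + s * exp b.
Proof.
  intros Hs; set (m := (1 - s) * a + s * b).
  pose proof (exp_ineq1_le (a - m)); pose proof (exp_ineq1_le (b - m)).
  assert (Ha : exp a = exp m * exp (a - m)) by (rewrite <- exp_plus; f_equal; ring).
  assert (Hb : exp b = exp m * exp (b - m)) by (rewrite <- exp_plus; f_equal; ring).
  pose proof (exp_pos m).
  assert (exp m * (1 + (a - m)) <= exp a) by (rewrite Ha; apply Rmult_le_compat_l; lra).
  assert (exp m * (1 + (b - m)) <= exp b) by (rewrite Hb; apply Rmult_le_compat_l; lra).
  assert ((1 - s) * (exp m * (1 + (a - m))) + s * (exp m * (1 + (b - m))) = exp m)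
    by (unfold m; ring).
  nra.
Qed.

Lemma rootp_le_iff S r rho : 0 <= S -> 0 < r -> 0 < rho ->
  rootp S r <= rho <-> S <= Rpower rho r.
Proof.
  intros HS Hr Hrho; unfold rootp; destruct (Req_EM_T S 0) as [->|Hn].
  - split; intros; [left; apply exp_pos | lra].
  - split; intros H.
    + replace S with (Rpower (Rpower S (/ r)) r)
        by (rewrite Rpower_mult, Rinv_l, Rpower_1; lra).
      apply Rle_Rpower_l; [lra | split; auto; apply exp_pos].
    + replace rho with (Rpower (Rpower rho r) (/ r))
        by (rewrite Rpower_mult, Rinv_r, Rpower_1; lra).
      apply Rle_Rpower_l; [left; apply Rinv_0_lt_compat; auto | lra].
Qed.

Lemma rootp_le_convex Sp Sq Ss r rho s : 0 < r -> 0 < rho -> 0 <= s <= 1 ->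
  0 <= Sp -> 0 <= Sq -> 0 <= Ss -> Ss <= (1 - s) * Sp + s * Sq ->
  rootp Sp r <= rho -> rootp Sq r <= rho -> rootp Ss r <= rho.
Proof.
  intros Hr Hrho Hs HSp HSq HSs Hconv Hp Hq.
  apply rootp_le_iff in Hp, Hq; auto; apply rootp_le_iff; auto.
  assert ((1 - s) * Sp <= (1 - s) * Rpower rho r) by (apply Rmult_le_compat_l; lra).
  assert (s * Sq <= s * Rpower rho r) by (apply Rmult_le_compat_l; lra).
  lra.
Qed.

Definition geo_path {K n1 d} (p q : pt K n1 d) (s : R) : pt K n1 d :=
  fun c => exp (ln (p c) + s * (ln (q c) - ln (p c))).

Section GeoPath.
Context {K n1 d : nat} (p q : pt K n1 d).

Lemma geo_path_pos s : Vpp (geo_path p q s).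
Proof. intros c; apply exp_pos. Qed.

Lemma geo_path_0 : Vpp p -> geo_path p q 0 = p.
Proof.
  intros Hp; apply functional_extensionality; intros c; unfold geo_path.
  rewrite Rmult_0_l, Rplus_0_r, exp_ln; auto.
Qed.

Lemma geo_path_1 : Vpp q -> geo_path p q 1 = q.
Proof.
  intros Hq; apply functional_extensionality; intros c; unfold geo_path.
  replace (ln (p c) + 1 * (ln (q c) - ln (p c))) with (ln (q c)) by ring.
  rewrite exp_ln; auto.
Qed.

Lemma geo_path_deriv c t :
  derivable_pt_lim (fun s => geo_path p q s c) t (geo_path p q t c * (ln (q c) - ln (p c))).
Proof.
  set (a := ln (p c)); set (b := ln (q c) - ln (p c)).
  assert (Haff : derivable_pt_lim (fun s => a + s * b) t b).
  { intros eps Heps; exists (mkposreal 1 Rlt_0_1); intros h Hh _.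
    replace ((a + (t + h) * b - (a + t * b)) / h - b) with 0 by (field; auto).
    rewrite Rabs_R0; auto. }
  exact (derivable_pt_lim_comp _ exp t _ _ Haff (derivable_pt_lim_exp _)).
Qed.

Lemma Rpower_geo_path_le s c r : Vpp p -> Vpp q -> 0 <= s <= 1 ->
  Rpower (Rabs (geo_path p q s c)) r
    <= (1 - s) * Rpower (Rabs (p c)) r + s * Rpower (Rabs (q c)) r.
Proof.
  intros Hp Hq Hs; unfold geo_path, Rpower.
  rewrite (Rabs_right (exp _)), (Rabs_right (p c)), (Rabs_right (q c))
    by (left; (apply exp_pos || apply Hp || apply Hq)).
  rewrite ln_exp.
  replace (r * (ln (p c) + s * (ln (q c) - ln (p c))))
    with ((1 - s) * (r * ln (p c)) + s * (r * ln (q c))) by ring.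
  apply exp_convex; auto.
Qed.

Lemma geo_path_Bpp pw pu rw ru s : 0 < pw -> 0 < pu -> 0 < rw -> 0 < ru ->
  Bpp pw pu rw ru p -> Bpp pw pu rw ru q -> 0 <= s <= 1 ->
  Bpp pw pu rw ru (geo_path p q s).
Proof.
  intros Hpw Hpu Hrw Hru [Hp [Hpu' Hpw']] [Hq [Hqu Hqw]] Hs.
  assert (Hpow := fun c r => Rpower_geo_path_le s c r Hp Hq Hs).
  assert (Hnn : forall x r, 0 <= Rpower x r) by (intros; left; apply exp_pos).
  split; [apply geo_path_pos | split].
  - unfold norm_u in *; refine (rootp_le_convex _ _ _ _ _ _ Hpu Hru Hs _ _ _ _ Hpu' Hqu);
      try (apply sumIx_nonneg; intros; apply sumIx_nonneg; intros; apply Hnn).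
    apply sumIx_convex_le; intros a; apply sumIx_convex_le; intros b; apply Hpow.
  - intros i; unfold norm_w_row in *.
    refine (rootp_le_convex _ _ _ _ _ _ Hpw Hrw Hs _ _ _ _ (Hpw' i) (Hqw i));
      try (apply sumIx_nonneg; intros; apply Hnn).
    apply sumIx_convex_le; intros j; apply Hpow.
Qed.

End GeoPath.

(** * Block distances *)

(* [block c] is the (0-based) index of the summand of [mu_gamma] containing the
   coordinate [c], and [block_dist p q k] is that summand without its weight;
   every [k >= K] gives the [u]-block. *)
Definition block {K n1 d} (c : coord K n1 d) : nat :=
  match c with inl (i, _) => proj1_sig i | inr _ => K end.

Definition block_dist {K n1 d} (p q : pt K n1 d) (k : nat) : R :=
  match lt_dec k K with
  | left h => maxIx n1 (fun j => Rabs (ln (wc p (exist _ k h) j) - ln (wc q (exist _ k h) j)))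
  | right _ => maxIx n1 (fun a => maxIx d (fun b => Rabs (ln (uc p a b) - ln (uc q a b))))
  end.

Section BlockDist.
Context {K n1 d : nat} (p q : pt K n1 d).

Lemma block_dist_w (i : Ix K) : block_dist p q (proj1_sig i) =
  maxIx n1 (fun j => Rabs (ln (wc p i j) - ln (wc q i j))).
Proof.
  unfold block_dist; destruct lt_dec as [h|h]; [|destruct i; simpl in h; lia].
  replace (exist _ (proj1_sig i) h) with i by (apply Ix_eq; reflexivity); reflexivity.
Qed.

Lemma block_dist_u : block_dist p q K =
  maxIx n1 (fun a => maxIx d (fun b => Rabs (ln (uc p a b) - ln (uc q a b)))).
Proof. unfold block_dist; destruct lt_dec; [lia | reflexivity]. Qed.

Lemma block_dist_nonneg k : 0 <= block_dist p q k.
Proof. unfold block_dist; destruct lt_dec; apply maxIx_nonneg. Qed.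

Lemma log_ratio_le_block_dist c : Rabs (ln (p c) - ln (q c)) <= block_dist p q (block c).
Proof.
  destruct c as [[i j]|[a b]]; simpl.
  - rewrite block_dist_w; exact (maxIx_ge n1 (fun j => Rabs (ln (wc p i j) - ln (wc q i j))) j).
  - rewrite block_dist_u; eapply Rle_trans; [|apply (maxIx_ge n1 _ a)].
    exact (maxIx_ge d (fun b => Rabs (ln (uc p a b) - ln (uc q a b))) b).
Qed.

Lemma block_dist_le k T : (k <= K)%nat -> 0 <= T ->
  (forall c, block c = k -> Rabs (ln (p c) - ln (q c)) <= T) -> block_dist p q k <= T.
Proof.
  intros Hk HT H; unfold block_dist; destruct lt_dec as [h|h].
  - apply maxIx_le; auto; intros j; apply (H (inl (exist _ k h, j))); reflexivity.
  - assert (k = K) by lia; subst.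
    apply maxIx_le; auto; intros a; apply maxIx_le; auto; intros b.
    apply (H (inr (a, b))); reflexivity.
Qed.

Lemma mu_gamma_block_dist gamma :
  mu_gamma gamma p q = sumN (S K) (fun k => gamma k * block_dist p q k).
Proof.
  unfold mu_gamma; simpl; rewrite block_dist_u, <- sumIx_proj1; f_equal.
  apply sumIx_ext; intros i; rewrite block_dist_w; reflexivity.
Qed.

Lemma log_gradient_bound (dF : coord K n1 d -> coord K n1 d -> pt K n1 d -> R) c P
  (a : nat -> R) FP : Vpp P ->
  (forall k, gw dF c k P <= a (proj1_sig k) * FP) -> gu dF c P <= a K * FP ->
  Rabs (lsum (enum_coord K n1 d) (fun c' => dF c c' P * (P c' * (ln (q c') - ln (p c')))))
    <= FP * sumN (S K) (fun k => a k * block_dist p q k).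
Proof.
  intros HP Hw Hu.
  eapply Rle_trans; [apply lsum_abs|].
  apply Rle_trans with (lsum (enum_coord K n1 d)
    (fun c' => block_dist p q (block c') * (Rabs (dF c c' P) * P c'))).
  { apply lsum_le; intros c' _.
    rewrite !Rabs_mult, Rabs_minus_sym, (Rabs_right (P c')) by (left; apply HP).
    apply Rle_trans with (Rabs (dF c c' P) * P c' * block_dist p q (block c')); [|right; ring].
    rewrite <- Rmult_assoc; apply Rmult_le_compat_l; [apply Rmult_le_pos; [apply Rabs_pos | left; apply HP]|].
    apply log_ratio_le_block_dist. }
  rewrite lsum_enum_coord.
  apply Rle_trans with (sumIx K (fun k => block_dist p q (proj1_sig k) * (a (proj1_sig k) * FP))
    + block_dist p q K * (a K * FP)).
  - apply Rplus_le_compat; [apply sumIx_le; intros k|].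
    + simpl; rewrite sumIx_scal; apply Rmult_le_compat_l; [apply block_dist_nonneg|].
      apply Hw.
    + simpl; rewrite sumIx_ext with (g := fun a => block_dist p q K *
        sumIx d (fun b => Rabs (dF c (inr (a, b)) P) * uc P a b))
        by (intros; apply sumIx_scal).
      rewrite sumIx_scal; apply Rmult_le_compat_l; [apply block_dist_nonneg | apply Hu].
  - rewrite (sumIx_proj1 K (fun k => block_dist p q k * (a k * FP))); simpl.
    rewrite Rmult_plus_distr_l, <- sumN_scal; right; f_equal;
      [apply sumN_ext; intros |]; ring.
Qed.

End BlockDist.

Lemma weighted_sum_le_Ubound K (A : nat -> nat -> R) (gamma D : nat -> R) :
  (forall k, (k <= K)%nat -> 0 < gamma k) -> (forall k, 0 <= D k) ->
  sumN (S K) (fun i => gamma i * sumN (S K) (fun k => A i k * D k))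
    <= Ubound K A gamma * sumN (S K) (fun k => gamma k * D k).
Proof.
  intros Hg HD.
  replace (sumN (S K) (fun i => gamma i * sumN (S K) (fun k => A i k * D k)))
    with (sumN (S K) (fun k => D k * sumN (S K) (fun i => A i k * gamma i))).
  - rewrite <- sumN_scal; apply sumN_le; intros k Hk.
    assert (Hgk : 0 < gamma k) by (apply Hg; lia).
    assert (Hratio : sumN (S K) (fun i => A i k * gamma i) / gamma k <= Ubound K A gamma)
      by exact (maxN_ge (S K) (fun k => sumN (S K) (fun i => A i k * gamma i) / gamma k) k Hk).
    apply (Rmult_le_compat_r (gamma k)) in Hratio; [|lra].
    unfold Rdiv in Hratio; rewrite Rmult_assoc, Rinv_l, Rmult_1_r in Hratio by lra.
    specialize (HD k); nra.
  - transitivity (sumN (S K) (fun k => sumN (S K) (fun i => gamma i * (A i k * D k)))).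
    + apply sumN_ext; intros k _; rewrite <- sumN_scal; apply sumN_ext; intros; ring.
    + rewrite sumN_exchange; apply sumN_ext; intros i _; apply sumN_scal.
Qed.

(** * The coordinatewise estimate *)

Section CoordinateBound.
Context {K n1 d : nat} (pw pu rw ru : R) (F : pt K n1 d -> pt K n1 d)
  (dF : coord K n1 d -> coord K n1 d -> pt K n1 d -> R) (Om : pt K n1 d -> Prop).
Hypotheses (hpw : 0 < pw) (hpu : 0 < pu) (hrw : 0 < rw) (hru : 0 < ru)
  (hOopen : open_V Om) (hBO : forall p, Bpp pw pu rw ru p -> Om p) (hC1 : C1_on Om F dF)
  (hFpos : forall p, Bpp pw pu rw ru p -> Vpp (F p)).

Lemma derivable_ln_F_geo_path p q c t : Bpp pw pu rw ru (geo_path p q t) ->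
  derivable_pt_lim (fun s => ln (F (geo_path p q s) c)) t
    (/ F (geo_path p q t) c * lsum (enum_coord K n1 d) (fun c' =>
       dF c c' (geo_path p q t) * (geo_path p q t c' * (ln (q c') - ln (p c'))))).
Proof.
  intros HB.
  apply (derivable_pt_lim_comp (fun s => F (geo_path p q s) c) ln).
  - apply (chain_rule (enum_coord K n1 d) (fun y => F y c) (geo_path p q t)
      (fun c' => dF c c' (geo_path p q t))); auto using In_enum_coord, geo_path_deriv.
    intros eta Heta; apply (first_order_approx F dF Om); auto.
  - apply derivable_pt_lim_ln, hFpos, HB.
Qed.

Lemma ln_F_block_bound c (a : nat -> R) :
  (forall k P, Bpp pw pu rw ru P -> gw dF c k P <= a (proj1_sig k) * F P c) ->
  (forall P, Bpp pw pu rw ru P -> gu dF c P <= a K * F P c) ->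
  forall p q, Bpp pw pu rw ru p -> Bpp pw pu rw ru q ->
  Rabs (ln (F p c) - ln (F q c)) <= sumN (S K) (fun k => a k * block_dist p q k).
Proof.
  intros Hgw Hgu p q Hp Hq.
  assert (HB : forall t, 0 <= t <= 1 -> Bpp pw pu rw ru (geo_path p q t))
    by (intros; apply geo_path_Bpp; auto).
  destruct (MVT_cor2 (fun s => ln (F (geo_path p q s) c))
    (fun t => / F (geo_path p q t) c * lsum (enum_coord K n1 d) (fun c' =>
       dF c c' (geo_path p q t) * (geo_path p q t c' * (ln (q c') - ln (p c')))))
    0 1 Rlt_0_1) as [xi [Hxi Hrange]].
  { intros t Ht; apply derivable_ln_F_geo_path, HB, Ht. }
  rewrite geo_path_0, geo_path_1 in Hxi by (apply Hp || apply Hq).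
  rewrite Rabs_minus_sym, Hxi, Rminus_0_r, Rmult_1_r.
  set (P := geo_path p q xi).
  assert (HBP : Bpp pw pu rw ru P) by (apply HB; lra).
  assert (HFP : 0 < F P c) by (apply hFpos, HBP).
  rewrite Rabs_mult, Rabs_inv, (Rabs_right (F P c)) by lra.
  apply (Rmult_le_reg_l (F P c)); auto.
  rewrite <- Rmult_assoc, Rinv_r, Rmult_1_l by lra.
  apply log_gradient_bound; [apply geo_path_pos | intros k; apply Hgw | apply Hgu]; exact HBP.
Qed.

End CoordinateBound.

Theorem mainTheorem6 (K n1 d : nat) (pw pu rw ru : R)
  (hpw : 1 < pw) (hpu : 1 < pu) (hrw : 0 < rw) (hru : 0 < ru)
  (F : pt K n1 d -> pt K n1 d)
  (dF : coord K n1 d -> coord K n1 d -> pt K n1 d -> R)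
  (Om : pt K n1 d -> Prop)
  (hOopen : open_V Om) (hOV : forall p, Om p -> Vpp p)
  (hBO : forall p, Bpp pw pu rw ru p -> Om p)
  (hC1 : C1_on Om F dF)
  (hFpos : forall p, Bpp pw pu rw ru p -> Vpp (F p))
  (A : nat -> nat -> R)
  (hA : forall i k, (i <= K)%nat -> (k <= K)%nat -> 0 <= A i k)
  (hww : forall (i k : Ix K) (j : Ix n1) p, Bpp pw pu rw ru p ->
     gw dF (inl (i, j)) k p <= A (proj1_sig i) (proj1_sig k) * F p (inl (i, j)))
  (hwu : forall (i : Ix K) (j : Ix n1) p, Bpp pw pu rw ru p ->
     gu dF (inl (i, j)) p <= A (proj1_sig i) K * F p (inl (i, j)))
  (huw : forall (k : Ix K) (a : Ix n1) (b : Ix d) p, Bpp pw pu rw ru p ->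
     gw dF (inr (a, b)) k p <= A K (proj1_sig k) * F p (inr (a, b)))
  (huu : forall (a : Ix n1) (b : Ix d) p, Bpp pw pu rw ru p ->
     gu dF (inr (a, b)) p <= A K K * F p (inr (a, b))) :
  forall (gamma : nat -> R), (forall k, (k <= K)%nat -> 0 < gamma k) ->
  forall p q, Bpp pw pu rw ru p -> Bpp pw pu rw ru q ->
    mu_gamma gamma (F p) (F q) <= Ubound K A gamma * mu_gamma gamma p q.
Proof.
  intros gamma Hgam p q Hp Hq.
  set (T := fun r => sumN (S K) (fun k => A r k * block_dist p q k)).
  assert (Hcoord : forall c, Rabs (ln (F p c) - ln (F q c)) <= T (block c)).
  { assert (Hbound := ln_F_block_bound pw pu rw ru F dF Om
      ltac:(lra) ltac:(lra) hrw hru hOopen hBO hC1 hFpos).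
    intros [[i j]|[a b]]; apply Hbound; auto. }
  rewrite !mu_gamma_block_dist.
  apply Rle_trans with (sumN (S K) (fun r => gamma r * T r)).
  - apply sumN_le; intros r Hr.
    apply Rmult_le_compat_l; [left; apply Hgam; lia|].
    apply block_dist_le; [lia | | intros c <-; apply Hcoord].
    apply sumN_nonneg; intros k Hk.
    apply Rmult_le_pos; [apply hA; lia | apply block_dist_nonneg].
  - apply weighted_sum_le_Ubound; auto using block_dist_nonneg.
Qed.
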